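(* Let $(\alpha_n,\beta_n)$ be a Bailey pair relative to $a$. Define $\alpha^*_0=\beta^*_0=1$ and, for $n\ge1$, \[ \alpha^*_n = (aq^{n}+q^{-n})\alpha_n,\qquad \beta^*_n =\frac{(1+aq^{2n})\beta_n-\beta_{n-1}}{q^{n}}-\frac{a}{(aq,q;q)_{n}}. \] Then $(\alpha^*_n,\beta^*_n)$ is a Bailey pair relative to $a$.
   Context: Notation: $(x;q)_n=\prod_{i=0}^{n-1}(1-xq^i)$, $(x_1,\dots,x_j;q)_n=(x_1;q)_n\cdots(x_j;q)_n$. A pair of sequences $(\alpha_n,\beta_n)_{n\ge0}$ is a Bailey pair relative to $a$ if $\alpha_0=1$ and for all $n\ge0$, $\beta_n=\sum_{r=0}^n\frac{\alpha_r}{(q;q)_{n-r}(aq;q)_{n+r}}$. Parameters are assumed generic so that no denominator vanishes. *)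

From mathcomp Require Import all_boot all_order all_algebra.
Set Implicit Arguments. Unset Strict Implicit. Unset Printing Implicit Defensive.
Import GRing.Theory.
Local Open Scope ring_scope.

Definition qpoch {F : fieldType} (x q : F) (n : nat) : F :=
  \prod_(i < n) (1 - x * q ^+ i).

Definition bailey_pair {F : fieldType} (a q : F) (alpha beta : nat -> F) : Prop :=
  alpha 0%N = 1 /\
  forall n : nat,
    beta n = \sum_(r < n.+1)
               alpha r / (qpoch q q (n - r) * qpoch (a * q) q (n + r)).

Definition alpha_star {F : fieldType} (a q : F) (alpha : nat -> F) (n : nat) : F :=
  match n with 0%N => 1 | _ => (a * q ^+ n + q ^- n) * alpha n end.

Definition beta_star {F : fieldType} (a q : F) (beta : nat -> F) (n : nat) : F :=
  match n with 0%N => 1 | _ =>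
    ((1 + a * q ^+ (2 * n)) * beta n - beta n.-1) / q ^+ n
    - a / (qpoch (a * q) q n * qpoch q q n) end.

(* Writing [w n r] for the kernel [1 / ((q;q)_(n-r) (aq;q)_(n+r))] of a Bailey pair,
   the identity [(1 + a q^(2n)) w n r - w (n-1) r = q^n (a q^r + q^-r) w n r]
   holds termwise for [r <= n] (with [w (n-1) n = 0]): cleared of denominators it is
   [(1 + a q^(2n)) - (1 - q^(n-r)) (1 - a q^(n+r)) = q^(n-r) + a q^(n+r)].
   Summing against [alpha] shows that [((1 + a q^(2n)) beta_n - beta_(n-1)) / q^n] is the
   Bailey transform of [(a q^r + q^-r) alpha_r].  This sequence agrees with [alpha*]
   except at [r = 0], where it is [1 + a] instead of [1]; the extra [a w n 0] is the
   correction term in [beta*]. *)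
From mathcomp Require Import all_boot all_order all_algebra.
From mathcomp Require Import ring.
Import GRing.Theory.
Local Open Scope ring_scope.

Lemma qpochS (F : fieldType) (x q : F) n :
  qpoch x q n.+1 = qpoch x q n * (1 - x * q ^+ n).
Proof. by rewrite /qpoch big_ord_recr. Qed.

Lemma qpoch_neq0 (F : fieldType) (x q : F) n :
  (forall i : nat, x * q ^+ i != 1) -> qpoch x q n != 0.
Proof.
move=> hx; elim: n => [|n IHn]; first by rewrite /qpoch big_ord0 oner_neq0.
by rewrite qpochS mulf_neq0 // subr_eq0 eq_sym.
Qed.

Section BaileyKernel.

Variables (F : fieldType) (a q : F).
Hypothesis hq : q != 0.
Hypothesis hqq : forall i : nat, q ^+ i.+1 != 1.
Hypothesis haq : forall i : nat, a * q ^+ i.+1 != 1.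

Definition bailey_weight (n r : nat) : F :=
  (qpoch q q (n - r) * qpoch (a * q) q (n + r))^-1.

Definition bailey_transform (alpha : nat -> F) (n : nat) : F :=
  \sum_(r < n.+1) alpha r * bailey_weight n r.

Lemma qpoch_q_neq0 n : qpoch q q n != 0.
Proof. by apply: qpoch_neq0 => i; rewrite -exprS. Qed.

Lemma qpoch_aq_neq0 n : qpoch (a * q) q n != 0.
Proof. by apply: qpoch_neq0 => i; rewrite -mulrA -exprS. Qed.

Lemma bailey_weight_diag n :
  (1 + a * q ^+ (2 * n)) * bailey_weight n n
  = q ^+ n * ((a * q ^+ n + q ^- n) * bailey_weight n n).
Proof.
have qn_neq0 : q ^+ n != 0 by rewrite expf_neq0.
by rewrite mulnC exprM; field.
Qed.

Lemma bailey_weight_step n r : (r <= n)%N ->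
  (1 + a * q ^+ (2 * n.+1)) * bailey_weight n.+1 r - bailey_weight n r
  = q ^+ n.+1 * ((a * q ^+ r + q ^- r) * bailey_weight n.+1 r).
Proof.
move=> le_rn; rewrite /bailey_weight (subSn le_rn) addSn !qpochS.
have eq_qn : q ^+ n.+1 = q * q ^+ (n - r) * q ^+ r.
  by rewrite -mulrA -exprD subnK // exprS.
have eq_q2n : q ^+ (2 * n.+1) = (q * q ^+ (n - r) * q ^+ r) ^+ 2.
  by rewrite -eq_qn mulnC exprM.
have eq_qnr : q ^+ (n + r) = q ^+ (n - r) * q ^+ r * q ^+ r.
  by rewrite -!exprD subnK.
have P_neq0 := qpoch_q_neq0 (n - r); have A_neq0 := qpoch_aq_neq0 (n + r).
have fP_neq0 : 1 - q * q ^+ (n - r) != 0 by rewrite subr_eq0 eq_sym -exprS.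
have fA_neq0 : 1 - a * q * q ^+ (n + r) != 0.
  by rewrite subr_eq0 eq_sym -mulrA -exprS.
have qr_neq0 : q ^+ r != 0 by rewrite expf_neq0.
rewrite eq_qnr in fA_neq0 *; rewrite eq_qn eq_q2n.
by field; rewrite P_neq0 A_neq0 fP_neq0 fA_neq0 qr_neq0.
Qed.

Lemma bailey_transform_shift (alpha : nat -> F) n :
  ((1 + a * q ^+ (2 * n.+1)) * bailey_transform alpha n.+1
     - bailey_transform alpha n) / q ^+ n.+1
  = bailey_transform (fun r => (a * q ^+ r + q ^- r) * alpha r) n.+1.
Proof.
have qn_neq0 : q ^+ n.+1 != 0 by rewrite expf_neq0.
apply: (mulIf qn_neq0); rewrite divfK // /bailey_transform.
rewrite big_ord_recr /= mulrDr mulr_sumr mulr_suml [in RHS]big_ord_recr /=.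
rewrite mulrDl addrAC -sumrB; congr (_ + _).
- apply: eq_bigr => [[r lt_rn]] _ /=.
  by rewrite mulrCA -mulrBr mulrC bailey_weight_step //; ring.
- by rewrite -mulrDl mulrCA bailey_weight_diag; ring.
Qed.

End BaileyKernel.

Arguments bailey_transform_shift {F a q}.

Theorem mainTheorem2 (F : fieldType) (a q : F) (alpha beta : nat -> F)
  (hq : q != 0)
  (hqq : forall i : nat, q ^+ i.+1 != 1)
  (haq : forall i : nat, a * q ^+ i.+1 != 1) :
  bailey_pair a q alpha beta ->
  bailey_pair a q (alpha_star a q alpha) (beta_star a q beta).
Proof.
move=> [alpha0 beta_eq]; split=> // -[|n].
  by rewrite /= big_ord1 /qpoch !big_ord0 mulr1 divr1.
have alpha_star_eq r : alpha_star a q alpha r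
    = (a * q ^+ r + q ^- r) * alpha r - (r == 0)%:R * a.
  by case: r => [|r] /=; [rewrite alpha0 expr0 invr1; ring | rewrite mul0r subr0].
rewrite /beta_star !beta_eq.
rewrite (bailey_transform_shift hq hqq haq).
under eq_bigr => r _ do rewrite alpha_star_eq mulrBl.
rewrite sumrB [X in _ = _ - X]big_ord_recl [X in _ = _ - (_ + X)]big1 => [|r _];
  last by rewrite !mul0r.
by rewrite /= mul1r addr0 subn0 addn0 [qpoch q q _ * _]mulrC.
Qed.
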